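(* Let $l,r>1$ and $p_1,\dots,p_q>1$ be integers, $n=l\,p_1\cdots p_q\, r$, and $A\in\{0,1\}^{n\times n}$. Then $A$ admits all of the factorizations \[ (l,\;p_1p_2\cdots p_q r),\quad (p_1 l,\;p_2\cdots p_q r),\quad\dots,\quad (p_1p_2\cdots p_q l,\; r) \] (i.e. the $(p_1\cdots p_k l,\; p_{k+1}\cdots p_q r)$ factorization for every $k=0,\dots,q$) if and only if $A$ admits an $(l,p_1,p_2,\dots,p_q,r)$ factorization.
   Context: Kronecker products of binary matrices use Boolean arithmetic ($1+1=1$). For positive integers $n_1,\dots,n_m$ with $\prod n_i=n$, an $(n_1,\dots,n_m)$ factorization of $A\in\{0,1\}^{n\times n}$ is an expression $A=A_1\otimes\cdots\otimes A_m$ with $A_i\in\{0,1\}^{n_i\times n_i}$. *)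

From mathcomp Require Import all_boot all_order all_algebra.
Set Implicit Arguments. Unset Strict Implicit. Unset Printing Implicit Defensive.

(* Index splitting for the Kronecker product: row index i of an (m*k)-matrix
   corresponds to the pair (i %/ k, i %% k). *)
Lemma kron_div_lt m k (i : 'I_(m * k)) : i %/ k < m.
Proof.
case: k i => [|k] i; first by case: i => x; rewrite muln0.
by rewrite ltn_divLR // (ltn_ord i).
Qed.

Lemma kron_mod_lt m k (i : 'I_(m * k)) : i %% k < k.
Proof.
case: k i => [|k] i; first by case: i => x; rewrite muln0.
by rewrite ltn_pmod.
Qed.

(* Only products of entries occur, so Boolean arithmetic (1+1=1) plays no role. *)
Definition bkron m k (A : 'M[bool]_m) (B : 'M[bool]_k) : 'M[bool]_(m * k) :=
  \matrix_(i, j) (A (Ordinal (kron_div_lt i)) (Ordinal (kron_div_lt j))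
                  && B (Ordinal (kron_mod_lt i)) (Ordinal (kron_mod_lt j))).

(* has_fact [:: n_1; ...; n_m] n A  <->  A = A_1 (x) (A_2 (x) ( ... (x) A_m)) with
   A_i : 'M[bool]_(n_i)  (n = n_1 * ... * n_m).  The empty Kronecker product is the
   1 x 1 matrix [1]. *)
Fixpoint has_fact (ns : seq nat) (n : nat) (A : 'M[bool]_n) : Prop :=
  match ns with
  | [::] => exists e : 1 = n, A = castmx (e, e) (\matrix_(i, j) true)
  | n1 :: ns' =>
      exists (k : nat) (A1 : 'M[bool]_n1) (B : 'M[bool]_k) (e : n1 * k = n),
        has_fact ns' B /\ A = castmx (e, e) (bkron A1 B)
  end.

From mathcomp Require Import all_boot all_order all_algebra.
From mathcomp Require Import zify.
Unset Printing Implicit Defensive.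

(* View a binary matrix through its support, a set of pairs of naturals, and for
   K > 0 write (i, j) = (K q + u, K q' + u') with u, u' < K.  The matrix is a Kronecker
   product X (x) Y with Y of size K iff its support is "K-closed": whenever it contains
   (i, j) and (i', j'), it also contains the pair with the block coordinates of (i, j)
   and the in-block coordinates of (i', j').  For D dividing K, D-closedness passes
   from Y to X (x) Y, and conversely from A = X (x) Y to the block Y.  By induction,
   for positive n_i, A has an (n_1, ..., n_m) factorization iff n = n_1 ... n_m and A
   is closed for every proper suffix product n_(k+1) ... n_m.  For (l, p_1, ..., p_q, r)
   these suffix products are the numbers p_(k+1) ... p_q r, which are exactly the
   right factors of the two-factor factorizations in the statement. *)

Definition mxfun {n} (A : 'M[bool]_n) (i j : nat) : bool :=
  match (insub i : option 'I_n), (insub j : option 'I_n) with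
  | Some a, Some b => A a b
  | _, _ => false
  end.

Section MatrixEntries.

Context {n : nat}.
Implicit Types A B : 'M[bool]_n.

Lemma mxfunE A (a b : 'I_n) : mxfun A a b = A a b.
Proof. by rewrite /mxfun !valK. Qed.

Lemma mxfun_out A i j : ~~ ((i < n) && (j < n)) -> mxfun A i j = false.
Proof.
by rewrite /mxfun; case: insubP => [a -> _|] //; case: insubP => [b -> _|].
Qed.

Lemma mxfun_mx (h : nat -> nat -> bool) i j :
  mxfun (\matrix_(a < n, b < n) h a b) i j = [&& i < n, j < n & h i j].
Proof.
have [/andP[lt_in lt_jn]|out] := boolP ((i < n) && (j < n)); last first.
  by rewrite mxfun_out //; case: (i < n) (j < n) out => [] [].
by rewrite -[i]/(val (Ordinal lt_in)) -[j]/(val (Ordinal lt_jn)) mxfunE mxE lt_in lt_jn.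
Qed.

Lemma mxfun_inj A B : mxfun A =2 mxfun B -> A = B.
Proof. by move=> eqAB; apply/matrixP => a b; rewrite -!mxfunE. Qed.

End MatrixEntries.

Lemma mxfun_castmx {m n} (e : m = n) (A : 'M[bool]_m) :
  mxfun (castmx (e, e) A) =2 mxfun A.
Proof. by case: n / e; rewrite castmx_id. Qed.

Definition kronf K (g h : nat -> nat -> bool) i j :=
  g (i %/ K) (j %/ K) && h (i %% K) (j %% K).

Lemma mxfun_bkron {m k} (X : 'M[bool]_m) (Y : 'M[bool]_k) :
  mxfun (bkron X Y) =2 kronf k (mxfun X) (mxfun Y).
Proof.
move=> i j; rewrite /kronf.
have [/andP[lt_i lt_j]|out] := boolP ((i < m * k) && (j < m * k)).
  rewrite -[i]/(val (Ordinal lt_i)) -[j]/(val (Ordinal lt_j)) mxfunE mxE.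
  by rewrite -!(mxfunE X (Ordinal _)) -!(mxfunE Y (Ordinal _)).
rewrite mxfun_out //; case: k X Y out => [|k] X Y out.
  by rewrite [mxfun Y _ _]mxfun_out ?andbF // modn0 ltn0.
by rewrite [mxfun X _ _]mxfun_out // !ltn_divLR.
Qed.

Definition splice D i i' := i %/ D * D + i' %% D.

Definition kron_closed D (f : nat -> nat -> bool) :=
  forall i j i' j', f i j -> f i' j' -> f (splice D i i') (splice D j j').

Lemma eq_kron_closed {D f f'} : f =2 f' -> kron_closed D f -> kron_closed D f'.
Proof. by move=> eqf closed_f i j i' j'; rewrite -!eqf; apply: closed_f. Qed.

Lemma splice_blockD K D m m' u u' : 0 < D -> D %| K ->
  splice D (m * K + u) (m' * K + u') = m * K + splice D u u'.
Proof.
move=> D_gt0 /dvdnP[c ->]; rewrite /splice !mulnA divnMDl // modnMDl.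
by rewrite mulnDl addnA.
Qed.

Lemma splice_div D i i' : 0 < D -> splice D i i' %/ D = i %/ D.
Proof.
by move=> D_gt0; rewrite /splice divnMDl // (divn_small (ltn_pmod _ D_gt0)) addn0.
Qed.

Lemma splice_mod D i i' : splice D i i' %% D = i' %% D.
Proof. by rewrite /splice modnMDl modn_mod. Qed.

Lemma splice_small D u u' : u < D -> splice D u u' = u' %% D.
Proof. by move=> lt_uD; rewrite /splice divn_small. Qed.

Lemma splice_ltn c D u u' : 0 < D -> u < c * D -> splice D u u' < c * D.
Proof.
move=> D_gt0 lt_u; have lt_q : u %/ D < c by rewrite ltn_divLR.
apply: (@leq_trans (u %/ D * D + D)); first by rewrite ltn_add2l ltn_pmod.
by rewrite -mulSnr leq_mul2r lt_q orbT.
Qed.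

Lemma kron_closed_kronf {K} g h : 0 < K -> kron_closed K (kronf K g h).
Proof.
move=> K_gt0 i j i' j' /andP[g_ij h_ij] /andP[g_ij' h_ij'].
by rewrite /kronf !splice_div // !splice_mod g_ij h_ij'.
Qed.

Lemma kron_closed_kronf_dvd {K D} g {h} : 0 < K -> 0 < D -> D %| K ->
  kron_closed D h -> kron_closed D (kronf K g h).
Proof.
move=> K_gt0 D_gt0 dvd_DK closed_h i j i' j' /andP[g_ij h_ij] /andP[_ h_ij'].
have spliceK x x' : splice D x x' = x %/ K * K + splice D (x %% K) (x' %% K).
  by rewrite {1}(divn_eq x K) {1}(divn_eq x' K) splice_blockD.
have lt_splice x x' : splice D (x %% K) (x' %% K) < K.
  have /dvdnP[c defK] := dvd_DK.
  by rewrite [X in _ < X]defK splice_ltn // -defK ltn_pmod.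
rewrite /kronf (spliceK i i') (spliceK j j') !divnMDl // !modnMDl.
rewrite !(divn_small (lt_splice _ _)) !(modn_small (lt_splice _ _)) !addn0 g_ij.
exact: closed_h.
Qed.

Lemma kron_closed_restrict {K D h} : 0 < D -> D %| K -> kron_closed D h ->
  kron_closed D (fun u v => [&& u < K, v < K & h u v]).
Proof.
move=> D_gt0 /dvdnP[c ->] closed_h u v u' v'.
by move=> /and3P[lt_u lt_v h_uv] /and3P[_ _ h_uv']; rewrite !splice_ltn // closed_h.
Qed.

Lemma kron_closed_decomp {N K} {f : nat -> nat -> bool} : 0 < K ->
    (forall i j, f i j -> (i < N * K) && (j < N * K)) -> kron_closed K f ->
  exists g h, f =2 kronf K g h /\
    forall D, 0 < D -> D %| K -> kron_closed D f -> kron_closed D h.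
Proof.
move=> K_gt0 supp_f closed_f.
have [/existsP[a /existsP[b f_ab]]|f0] :=
  boolP [exists a : 'I_(N * K), exists b : 'I_(N * K), f a b]; last first.
  exists (fun _ _ => false), (fun _ _ => false); split=> [i j|D _ _ _ //].
  apply/negbTE/negP => f_ij; case/negP: f0.
  have /andP[lt_i lt_j] := supp_f _ _ f_ij.
  by apply/existsP; exists (Ordinal lt_i); apply/existsP; exists (Ordinal lt_j).
(* Any nonzero block of [f] can serve as the right factor [h]. *)
exists (fun x y => f (x * K + a %% K) (y * K + b %% K)).
exists (fun u v => f (a %/ K * K + u) (b %/ K * K + v)); split.
  move=> i j; rewrite /kronf; apply/idP/andP => [f_ij|[g_ij h_ij]].
    by split; [apply: (closed_f _ _ _ _ f_ij f_ab) | apply: (closed_f _ _ _ _ f_ab f_ij)].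
  have := closed_f _ _ _ _ g_ij h_ij.
  by rewrite !splice_blockD // !splice_small ?ltn_pmod // !modn_mod -!divn_eq.
move=> D D_gt0 dvd_DK closed_fD u v u' v' h_uv h_uv'.
by have := closed_fD _ _ _ _ h_uv h_uv'; rewrite !splice_blockD.
Qed.

Lemma kron_closed_bkron_factor {n1 K n} {A : 'M[bool]_n} (e : n1 * K = n) :
    0 < K -> kron_closed K (mxfun A) ->
  exists (X : 'M[bool]_n1) (Y : 'M[bool]_K), A = castmx (e, e) (bkron X Y) /\
    forall D, 0 < D -> D %| K -> kron_closed D (mxfun A) -> kron_closed D (mxfun Y).
Proof.
move=> K_gt0 closed_A.
have supp_A i j : mxfun A i j -> (i < n1 * K) && (j < n1 * K).
  by rewrite e; apply: contraTT => /mxfun_out ->.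
have [g [h [defA closed_h]]] := kron_closed_decomp K_gt0 supp_A closed_A.
exists (\matrix_(a < n1, b < n1) g a b)%R, (\matrix_(u < K, v < K) h u v)%R; split.
  apply: mxfun_inj => i j; rewrite mxfun_castmx mxfun_bkron /kronf !mxfun_mx.
  rewrite !ltn_pmod // !ltn_divLR // e.
  have [/andP[lt_i lt_j]|out] := boolP ((i < n) && (j < n)).
    by rewrite defA lt_i lt_j.
  by rewrite mxfun_out //; case: (i < n) (j < n) out => [] [].
move=> D D_gt0 dvd_DK /(closed_h D D_gt0 dvd_DK) /(kron_closed_restrict D_gt0 dvd_DK).
by apply: eq_kron_closed => u v; rewrite mxfun_mx.
Qed.

Lemma kron_closed_bkron {m k n} (e : m * k = n) (X : 'M[bool]_m) (Y : 'M[bool]_k) :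
  0 < k -> kron_closed k (mxfun (castmx (e, e) (bkron X Y))).
Proof.
move=> k_gt0; have := kron_closed_kronf (mxfun X) (mxfun Y) k_gt0.
by apply: eq_kron_closed => i j; rewrite mxfun_castmx mxfun_bkron.
Qed.

Lemma kron_closed_bkron_dvd {m k n D} {e : m * k = n}
    {X : 'M[bool]_m} {Y : 'M[bool]_k} :
    0 < k -> 0 < D -> D %| k -> kron_closed D (mxfun Y) ->
  kron_closed D (mxfun (castmx (e, e) (bkron X Y))).
Proof.
move=> k_gt0 D_gt0 dvd_Dk closed_Y.
have := kron_closed_kronf_dvd (mxfun X) k_gt0 D_gt0 dvd_Dk closed_Y.
by apply: eq_kron_closed => i j; rewrite mxfun_castmx mxfun_bkron.
Qed.

Lemma has_fact_seq1 {m n} (A : 'M[bool]_n) : has_fact [:: m] A <-> n = m.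
Proof.
split=> [[k [X [B [e [[e1 _] _]]]]]|def_n]; first by rewrite -e -e1 muln1.
subst n; exists 1, A, (\matrix_(i, j) true)%R, (muln1 m); split; first by exists erefl.
apply: mxfun_inj => i j; rewrite mxfun_castmx mxfun_bkron /kronf !divn1 !modn1.
by rewrite -[0]/(val (@ord0 0)) mxfunE mxE andbT.
Qed.

Lemma forall_proper_suffix {T} (P : seq T -> Prop) (x y : T) s :
  (forall k, 0 < k < size [:: x, y & s] -> P (drop k [:: x, y & s])) <->
  P (y :: s) /\ (forall k, 0 < k < size (y :: s) -> P (drop k (y :: s))).
Proof.
split=> [P_suff | [P_s P_suff] [|[|k]] //= lt_k].
  split=> [|k /andP[k_gt0 lt_k]]; first exact: (P_suff 1).
  exact: (P_suff k.+1 lt_k).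
exact: (P_suff k.+1 lt_k).
Qed.

Lemma prodn_seq_gt0 (s : seq nat) : all (fun p => 0 < p) s -> 0 < \prod_(p <- s) p.
Proof. by move=> /allP pos_s; rewrite big_seq prodn_cond_gt0. Qed.

Lemma prodn_take_drop (s : seq nat) k :
  \prod_(p <- s) p = \prod_(p <- take k s) p * \prod_(p <- drop k s) p.
Proof. by rewrite -big_cat cat_take_drop. Qed.

Lemma prod_drop_dvdn (s : seq nat) k : \prod_(p <- drop k s) p %| \prod_(p <- s) p.
Proof. by rewrite (prodn_take_drop s k) dvdn_mull. Qed.

Lemma has_factP ns n (A : 'M[bool]_n) : ns != [::] -> all (fun p => 0 < p) ns ->
  has_fact ns A <-> n = \prod_(p <- ns) p /\
    forall k, 0 < k < size ns -> kron_closed (\prod_(p <- drop k ns) p) (mxfun A).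
Proof.
case: ns => [//|n1 ns] _; elim: ns n1 n A => [|n2 ns IH] n1 n A.
  rewrite has_fact_seq1 big_seq1.
  by split=> [def_n | [def_n _]] //; split=> // [[|[]]].
case/andP=> n1_gt0 pos_ns.
rewrite (forall_proper_suffix (fun s => kron_closed (\prod_(p <- s) p) (mxfun A))).
rewrite big_cons.
set K := \prod_(p <- n2 :: ns) p.
have K_gt0 : 0 < K by exact: prodn_seq_gt0.
have suffix_gt0 k : 0 < \prod_(p <- drop k (n2 :: ns)) p.
  exact: dvdn_gt0 K_gt0 (prod_drop_dvdn _ k).
split=> [[k [X [B [e [fact_B ->]]]]] | [def_n [closed_A closed_suffix]]].
  have [def_k closed_B] := (IH n2 k B pos_ns).1 fact_B; subst k.
  split; first by rewrite e.
  split=> [|k lt_k]; first exact: kron_closed_bkron.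
  apply: kron_closed_bkron_dvd K_gt0 (suffix_gt0 k) (prod_drop_dvdn _ k) _.
  exact: closed_B.
have e : n1 * K = n by rewrite def_n.
have [X [Y [defA closed_Y]]] := kron_closed_bkron_factor e K_gt0 closed_A.
exists K, X, Y, e; split=> //; apply/(IH n2 K Y pos_ns); split=> // k lt_k.
exact: closed_Y _ (suffix_gt0 k) (prod_drop_dvdn _ k) (closed_suffix k lt_k).
Qed.

Lemma has_fact2 a b n (A : 'M[bool]_n) : 0 < a -> 0 < b ->
  has_fact [:: a; b] A <-> n = a * b /\ kron_closed b (mxfun A).
Proof.
move=> a_gt0 b_gt0; rewrite has_factP //=; last by rewrite a_gt0 b_gt0.
have -> : \prod_(p <- [:: a; b]) p = a * b by rewrite !big_cons big_nil muln1.
split=> [[def_n closed_A] | [def_n closed_A]]; split=> //.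
  by have := closed_A 1 isT; rewrite big_seq1.
by case=> [|[|k]] //= _; rewrite big_seq1.
Qed.

Lemma prod_drop_cons_cats1 x y (s : seq nat) k : k <= size s ->
  \prod_(p <- drop k.+1 (x :: s ++ [:: y])) p = \prod_(p <- drop k s) p * y.
Proof. by move=> le_ks; rewrite /= cats1 drop_rcons // -cats1 big_cat big_seq1. Qed.

Lemma prod_take_drop_gt0 (s : seq nat) k : all (fun p => 0 < p) s ->
  0 < \prod_(p <- take k s) p /\ 0 < \prod_(p <- drop k s) p.
Proof.
by move=> pos_s; apply/andP; rewrite -muln_gt0 -prodn_take_drop prodn_seq_gt0.
Qed.

Theorem corollary2 (l r : nat) (ps : seq nat) (n : nat) (A : 'M[bool]_n) :
  1 < l -> 1 < r -> 0 < size ps -> all (fun p => 1 < p) ps ->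
  n = (l * \prod_(p <- ps) p * r)%N ->
  (forall k, k <= size ps ->
     has_fact [:: (\prod_(p <- take k ps) p * l)%N; (\prod_(p <- drop k ps) p * r)%N] A)
  <-> has_fact (l :: ps ++ [:: r]) A.
Proof.
move=> /ltnW l_gt0 /ltnW r_gt0 _ /(sub_all (fun p => @ltnW 1 p)) pos_ps def_n.
rewrite has_factP //; last by rewrite /= l_gt0 all_cat pos_ps /= r_gt0.
have size_factors : size (l :: ps ++ [:: r]) = (size ps).+2 by rewrite /= size_cat addn1.
have fact2 k : k <= size ps -> has_fact [:: \prod_(p <- take k ps) p * l;
      \prod_(p <- drop k ps) p * r] A <->
    kron_closed (\prod_(p <- drop k.+1 (l :: ps ++ [:: r])) p) (mxfun A).
  move=> le_k; have [take_gt0 drop_gt0] := prod_take_drop_gt0 ps k pos_ps.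
  rewrite has_fact2 ?muln_gt0 ?take_gt0 ?drop_gt0 ?l_gt0 ?r_gt0 // prod_drop_cons_cats1 //.
  have def_nk : n = \prod_(p <- take k ps) p * l * (\prod_(p <- drop k ps) p * r).
    by rewrite def_n (prodn_take_drop ps k); lia.
  by split=> [[] | ].
split=> [fact2_all | [_ closed_suffix] k le_k].
  split; first by rewrite def_n big_cons big_cat big_seq1 mulnA.
  by case=> [|k] //; rewrite size_factors ltnS => lt_k; apply/fact2/fact2_all.
by apply/fact2 => //; apply: closed_suffix; rewrite size_factors.
Qed.
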